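(* Let $(b,c)$ be a connected graph over a countable set $X$, $G$ a nilpotent group acting cocompactly on $X$ with $H_{b,c}$ $G$-invariant, and $x_0\in X$. Let $R\subseteq G$ be a normal subgroup, $\pi:G\to G/R$ the projection and $Q(R)=\pi^{-1}(Z(G/R))$, where $Z(G/R)$ is the centre. Then for all $f\in\mathcal{K}^R$, $q\in Q(R)$ and $g\in G$ we have $T_qT_gf=T_gT_qf$.
   Context: A graph over $X$ is $(b,c)$ with $b:X\times X\to[0,\infty)$, $c:X\to\mathbb{R}$, $\sum_yb(x,y)<\infty$ ($b$ need not be symmetric); connected: any two points are joined by a finite sequence $y_1,\dots,y_n$ with $b(y_i,y_{i+1})>0$. $H_{b,c}f(x)=\sum_yb(x,y)(f(x)-f(y))+c(x)f(x)$ on $\mathrm{Dom}(H)=\{f:\sum_yb(x,y)|f(y)|<\infty\ \forall x\}$; $\mathcal{H}^+$: nonnegative nonzero $f$ with $Hf=0$. $T_gf(x)=f(g^{-1}x)$; cocompact: $GV=X$ for some finite $V$; $H$ is $G$-invariant if $T_g$ preserves $\mathrm{Dom}(H)$ and $HT_g=T_gH$. $\mathcal{K}$ is the closure in $C(X)$ (product topology) of $\{f\in\mathcal{H}^+:f(x_0)=1\}$ and $\mathcal{K}^R=\{f\in\mathcal{K}:T_rf=f\ \forall r\in R\}$. *)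

From HB Require Import structures.
From mathcomp Require Import all_boot all_order all_algebra.
From mathcomp Require Import all_classical all_reals all_analysis.
Set Implicit Arguments. Unset Strict Implicit. Unset Printing Implicit Defensive.
Import Order.TTheory GRing.Theory Num.Theory.
Import numFieldNormedType.Exports.
Local Open Scope classical_set_scope.
Local Open Scope ring_scope.

Section Graphs.
Variables (R : realType) (X : countType).

Definition is_graph (b : X -> X -> R) : Prop :=
  (forall x y, 0 <= b x y) /\
  (forall x, summable [set: X] (fun y => (b x y)%:E)).

Definition graph_connected (b : X -> X -> R) : Prop :=
  forall x y : X, exists s : seq X,
    path (fun u v => 0 < b u v) x s /\ last x s = y.

Definition rsum (h : X -> R) : R :=
  fine (\esum_(y in [set: X]) (Num.max (h y) 0)%:E) -
  fine (\esum_(y in [set: X]) (Num.max (- h y) 0)%:E).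

Definition DomH (b : X -> X -> R) (f : X -> R) : Prop :=
  forall x, summable [set: X] (fun y => (b x y * `|f y|)%:E).

Definition Hbc (b : X -> X -> R) (c : X -> R) (f : X -> R) : X -> R :=
  fun x => rsum (fun y => b x y * (f x - f y)) + c x * f x.

Definition Hplus (b : X -> X -> R) (c : X -> R) : set (X -> R) :=
  [set f | DomH b f /\ (forall x, Hbc b c f x = 0) /\
           (forall x, 0 <= f x) /\ f <> (fun _ => 0)].

Definition Kset (b : X -> X -> R) (c : X -> R) (x0 : X) : set (X -> R) :=
  closure ([set f | Hplus b c f /\ f x0 = 1] : set {ptws X -> R}).

End Graphs.

Section Groups.
Local Open Scope group_scope.
Variable G : groupType.

Fixpoint upper_central (n : nat) : set G :=
  match n with
  | 0 => [set 1]
  | n'.+1 => [set x | forall g : G, upper_central n' [~ x, g]]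
  end.

Definition nilpotent_group : Prop := exists n, upper_central n = [set: G].

Definition normal_subgroup (N : set G) : Prop :=
  N 1 /\ (forall r s, N r -> N s -> N (r * s^-1)) /\
  (forall g r, N r -> N (r ^ g)).

(* Q(N) = pi^{-1}(Z(G/N)):  pi(q) pi(g) = pi(g) pi(q) in G/N for all g,
   i.e. the cosets (q g) N and (g q) N coincide *)
Definition Qpre (N : set G) : set G :=
  [set q | forall g : G, N ((g * q)^-1 * (q * g))].

Variable X : Type.

Definition is_action (act : G -> X -> X) : Prop :=
  (forall x, act 1 x = x) /\ (forall g h x, act (g * h) x = act g (act h x)).

Definition cocompact (act : G -> X -> X) : Prop :=
  exists V : set X, finite_set V /\
    forall x : X, exists g : G, exists2 v, V v & x = act g v.

Definition Tg {T : Type} (act : G -> X -> X) (g : G) (f : X -> T) : X -> T :=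
  fun x => f (act g^-1 x).

End Groups.

Definition G_invariant (R : realType) (X : countType) (G : groupType)
  (act : G -> X -> X) (b : X -> X -> R) (c : X -> R) : Prop :=
  forall g : G, forall f : X -> R, DomH b f ->
    DomH b (Tg act g f) /\ Hbc b c (Tg act g f) = Tg act g (Hbc b c f).

Definition KsetR (R : realType) (X : countType) (G : groupType)
  (act : G -> X -> X) (b : X -> X -> R) (c : X -> R) (x0 : X) (N : set G)
  : set (X -> R) :=
  [set f | Kset b c x0 f /\ forall r, N r -> Tg act r f = f].

From mathcomp Require Import all_boot all_order all_algebra.
From mathcomp Require Import all_classical all_reals all_analysis.

Set Implicit Arguments.
Unset Strict Implicit.
Unset Printing Implicit Defensive.

(* Since [T_q T_g = T_(qg)] and [T_g T_q = T_(gq)], it suffices that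
   [qg = gq r] with [r := (gq)^-1 (qg)]; this [r] lies in [N] because [q] is
   central modulo [N], and [f] is invariant under [N]. *)

Local Open Scope group_scope.

Section TranslationOperators.
Variables (G : groupType) (X : Type) (act : G -> X -> X).
Hypothesis act_action : is_action act.

Lemma TgM (T : Type) (g h : G) (f : X -> T) :
  Tg act g (Tg act h f) = Tg act (g * h) f.
Proof.
have [_ actM] := act_action.
by apply: funext => x; rewrite /Tg invgM actM.
Qed.

Lemma Tg_mulr_fixed (T : Type) (g r : G) (f : X -> T) :
  Tg act r f = f -> Tg act (g * r) f = Tg act g f.
Proof. by move=> fixed_f; rewrite -TgM fixed_f. Qed.

End TranslationOperators.

Lemma Qpre_commute_mod (G : groupType) (N : set G) (q g : G) :
  Qpre N q -> exists2 r, N r & q * g = g * q * r.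
Proof. by move=> Nq; exists ((g * q)^-1 * (q * g)); [exact: Nq | rewrite mulVKg]. Qed.

Theorem lemma4 (R : realType) (X : countType) (b : X -> X -> R) (c : X -> R)
  (G : groupType) (act : G -> X -> X) (x0 : X) (N : set G) :
  is_graph b -> graph_connected b ->
  nilpotent_group G -> is_action act -> cocompact act ->
  G_invariant act b c ->
  normal_subgroup N ->
  forall f, KsetR act b c x0 N f ->
  forall q, Qpre N q -> forall g : G,
    Tg act q (Tg act g f) = Tg act g (Tg act q f).
Proof.
move=> _ _ _ act_action _ _ _ f [_ N_fixes_f] q Nq g.
have [r Nr qgE] := Qpre_commute_mod g Nq.
rewrite !(TgM act_action) qgE.
exact/(Tg_mulr_fixed act_action)/N_fixes_f.
Qed.
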